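(* Let $H$ be the Hamiltonian defined on the interval $[0,1]$ a.e. by \[ H(t):= \begin{cases} \begin{pmatrix}1&0\\0&0\end{pmatrix} & \text{if } e^{-(2n+1)} < t \le e^{-2n}, \\[1.5ex] \begin{pmatrix}0&0\\0&1\end{pmatrix} & \text{if } e^{-(2n+2)} < t \le e^{-(2n+1)} \end{cases} \qquad\text{for }n\in\mathbb{N}_0. \] Let $\kappa_H(r)$ and $K_H(t;r)$ be defined as below with $c=1$. Then \[ \kappa_H(r) \asymp \log r, \qquad \int_0^1 K_H(t;r)\,\mathrm{d}t \asymp (\log r)^2, \] for $r>r_0=\frac{1}{\sqrt{\det\Omega(0,1)}}$.
   Context: Write $H=\begin{pmatrix}h_1&h_3\\ h_3&h_2\end{pmatrix}$, $\Omega(s,t)=\int_s^tH(u)\,\mathrm{d}u$, $\omega_j(s,t)=\int_s^th_j$. With $c=1$: $(\hat t,\hat s)$ is the unique pair with $\det\Omega(0,\hat t(r))=\frac{1}{r^2}$ for $r>r_0$ and $\hat s(t;r)\le t$, $\det\Omega(\hat s(t;r),t)=\frac{1}{r^2}$ for $t\ge\hat t(r)$; $K_H(t;r):=\mathbf{1}_{[0,\hat t(r))}(t)\frac{\omega_2(0,t)h_1(t)}{\frac{1}{r^2}+(\omega_3(0,t))^2}+\mathbf{1}_{[\hat t(r),1)}(t)\frac{h_1(t)}{\omega_1(\hat s(t;r),t)}$. $\kappa_H(r)$ is produced by the algorithm: $\sigma_0^{(r)}:=0$; if $\det\Omega(\sigma_{j-1}^{(r)},1)>\frac{1}{r^2}$,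 let $\sigma_j^{(r)}\in(\sigma_{j-1}^{(r)},1)$ be the unique point with $\det\Omega(\sigma_{j-1}^{(r)},\sigma_j^{(r)})=\frac{1}{r^2}$; otherwise set $\sigma_j^{(r)}:=1$, $\kappa_H(r):=j$ and stop. $f\asymp g$ means $c_1g\le f\le c_2g$ for constants $c_1,c_2>0$ (here for sufficiently large $r$). *)

From Stdlib Require Import Reals Lra ClassicalEpsilon.
From Coquelicot Require Import Coquelicot.
Open Scope R_scope.

(* A 2x2 Hamiltonian H = [[h1, h3], [h3, h2]] given by its three entries. *)
Record Ham := MkHam { h1 : R -> R ; h2 : R -> R ; h3 : R -> R }.

Definition omega (h : R -> R) (s t : R) : R := RInt h s t.

Definition detOmega (H : Ham) (s t : R) : R :=
  omega (h1 H) s t * omega (h2 H) s t - (omega (h3 H) s t) ^ 2.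

Definition r0 (H : Ham) : R := 1 / sqrt (detOmega H 0 1).

Definition the_R (P : R -> Prop) : R := epsilon (inhabits 0) P.
Definition the_nat (P : nat -> Prop) : nat := epsilon (inhabits 0%nat) P.

Definition ind (P : R -> Prop) (t : R) : R :=
  if excluded_middle_informative (P t) then 1 else 0.

Definition t_hat (H : Ham) (r : R) : R :=
  the_R (fun t => 0 <= t <= 1 /\ detOmega H 0 t = 1 / r ^ 2).

Definition s_hat (H : Ham) (r t : R) : R :=
  the_R (fun s => 0 <= s <= t /\ detOmega H s t = 1 / r ^ 2).

(* K_H(t;r) with c = 1 *)
Definition K_H (H : Ham) (r t : R) : R :=
  ind (fun u => 0 <= u < t_hat H r) t *
    (omega (h2 H) 0 t * h1 H t / (1 / r ^ 2 + (omega (h3 H) 0 t) ^ 2))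
  + ind (fun u => t_hat H r <= u < 1) t *
    (h1 H t / omega (h1 H) (s_hat H r t) t).

Fixpoint sigma (H : Ham) (r : R) (j : nat) : R :=
  match j with
  | O => 0
  | S j' =>
      let p := sigma H r j' in
      if Rlt_dec (1 / r ^ 2) (detOmega H p 1)
      then the_R (fun s => p < s < 1 /\ detOmega H p s = 1 / r ^ 2)
      else 1
  end.

Definition kappa_spec (H : Ham) (r : R) (k : nat) : Prop :=
  (1 <= k)%nat /\
  ~ (1 / r ^ 2 < detOmega H (sigma H r (k - 1)) 1) /\
  (forall i : nat, (i < k - 1)%nat -> 1 / r ^ 2 < detOmega H (sigma H r i) 1).

Definition kappa_H (H : Ham) (r : R) : nat := the_nat (kappa_spec H r).

Definition hex1 (t : R) : R :=
  if excluded_middle_informative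
       (exists n : nat, exp (- (2 * INR n + 1)) < t <= exp (- (2 * INR n)))
  then 1 else 0.

Definition hex2 (t : R) : R :=
  if excluded_middle_informative
       (exists n : nat, exp (- (2 * INR n + 2)) < t <= exp (- (2 * INR n + 1)))
  then 1 else 0.

Definition Hex : Ham := MkHam hex1 hex2 (fun _ => 0).

From Pilot Require Import Defs.
From Stdlib Require Import Reals Lra Lia Psatz Wf_nat ClassicalEpsilon Classical.
From Coquelicot Require Import Coquelicot.
Open Scope R_scope.

(** Here [h1] and [h2] are the indicators of alternate blocks [(e^{-(n+1)}, e^{-n}]], so
    [det Omega(s,t)] vanishes when [s] and [t] lie in one block, and equals
    [(t - e^{-(n+1)}) (e^{-(n+1)} - s)] when they lie in the adjacent blocks [n] and [n+1].
    Put [L = ln r].  A step of the algorithm therefore crosses at least one knot [e^{-n}],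
    and it cannot span two whole blocks around [e^{-n}] while [n < L - 2], since such a
    step already has determinant about [e^{-2n} > 1/r^2].  As [sigma_1] is about [1/r],
    the algorithm descends through the about [L] blocks between [1/r] and [1] one or two
    blocks at a time, so [L/4 <= kappa_H(r) <= 2L].
    For the integral, [K_H <= r^2] everywhere and [K_H = 0] on odd blocks.  On an even
    block [n] above [t_hat], [K_H(t) = 1/omega_1(s_hat t, t)] is at most
    [1/(t - e^{-(n+1)})], and at least that once [t - e^{-(n+1)}] exceeds about
    [e^{n+2}/r^2]; integrating gives a contribution between about [2L - 2n] and [2L],
    and summing over the even blocks between [1/r] and [1] gives order [L^2]. *)

(** * Riemann integrability *)

Lemma open_interval_ordered (a b x : R) :
  a <= b -> Rmin a b < x < Rmax a b -> a < x < b.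
Proof. intros Hab. rewrite Rmin_left, Rmax_right by exact Hab. easy. Qed.

Lemma RInt_const_R (c a b : R) : RInt (fun _ => c) a b = c * (b - a).
Proof. rewrite RInt_const. unfold scal; simpl; unfold mult; simpl. ring. Qed.

Lemma RInt_point_R (f : R -> R) (a : R) : RInt f a a = 0.
Proof. rewrite RInt_point. reflexivity. Qed.

Lemma RInt_Chasles_R (f : R -> R) (a b c : R) :
  ex_RInt f a b -> ex_RInt f b c -> RInt f a b + RInt f b c = RInt f a c.
Proof. apply (RInt_Chasles f a b c). Qed.

Lemma ex_RInt_subinterval (f : R -> R) (a b c d : R) :
  a <= c -> c <= d -> d <= b -> ex_RInt f a b -> ex_RInt f c d.
Proof.
  intros Hac Hcd Hdb Hf.
  apply (ex_RInt_Chasles_1 f c d b); [lra|].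
  apply (ex_RInt_Chasles_2 f a c b); [lra|exact Hf].
Qed.

Lemma ex_RInt_const_on (f : R -> R) (a b c : R) :
  a <= b -> (forall x, a < x < b -> f x = c) -> ex_RInt f a b.
Proof.
  intros Hab Hf. apply ex_RInt_ext with (fun _ => c); [|apply ex_RInt_const].
  intros x Hx. symmetry. apply Hf, open_interval_ordered; assumption.
Qed.

Lemma RInt_const_on (f : R -> R) (a b c : R) :
  a <= b -> (forall x, a < x < b -> f x = c) -> RInt f a b = c * (b - a).
Proof.
  intros Hab Hf. rewrite <- RInt_const_R. apply RInt_ext.
  intros x Hx. apply Hf, open_interval_ordered; assumption.
Qed.

Definition glue (c : R) (f g : R -> R) (x : R) : R :=
  if Rle_dec x c then f x else g x.

Lemma glue_ext_left (f g : R -> R) (a c : R) :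
  a <= c -> forall x, Rmin a c < x < Rmax a c -> f x = glue c f g x.
Proof.
  intros Hac x Hx. apply open_interval_ordered in Hx; [|exact Hac].
  unfold glue. destruct (Rle_dec x c); [reflexivity|lra].
Qed.

Lemma glue_ext_right (f g : R -> R) (c b : R) :
  c <= b -> forall x, Rmin c b < x < Rmax c b -> g x = glue c f g x.
Proof.
  intros Hcb x Hx. apply open_interval_ordered in Hx; [|exact Hcb].
  unfold glue. destruct (Rle_dec x c); [lra|reflexivity].
Qed.

Lemma ex_RInt_glue (f g : R -> R) (a c b : R) : a <= c <= b ->
  ex_RInt f a c -> ex_RInt g c b -> ex_RInt (glue c f g) a b.
Proof.
  intros Hc Hf Hg. apply ex_RInt_Chasles with c.
  - exact (ex_RInt_ext _ _ a c (glue_ext_left f g a c (proj1 Hc)) Hf).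
  - exact (ex_RInt_ext _ _ c b (glue_ext_right f g c b (proj2 Hc)) Hg).
Qed.

Lemma RInt_glue (f g : R -> R) (a c b : R) : a <= c <= b ->
  ex_RInt f a c -> ex_RInt g c b ->
  RInt (glue c f g) a b = RInt f a c + RInt g c b.
Proof.
  intros Hc Hf Hg.
  rewrite <- (RInt_Chasles_R _ a c b).
  - rewrite <- (RInt_ext _ _ a c (glue_ext_left f g a c (proj1 Hc))).
    rewrite <- (RInt_ext _ _ c b (glue_ext_right f g c b (proj2 Hc))).
    reflexivity.
  - exact (ex_RInt_ext _ _ a c (glue_ext_left f g a c (proj1 Hc)) Hf).
  - exact (ex_RInt_ext _ _ c b (glue_ext_right f g c b (proj2 Hc)) Hg).
Qed.

Definition StepFun_integrable {a b : R} (phi : StepFun a b) :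
  Riemann_integrable phi a b.
Proof.
  intro eps. exists phi, (mkStepFun (StepFun_P4 a b 0)). split.
  - intros t _. simpl. unfold fct_cte. rewrite Rminus_diag, Rabs_R0. lra.
  - rewrite StepFun_P18, Rmult_0_l, Rabs_R0. apply cond_pos.
Defined.

Lemma RiemannInt_StepFun {a b : R} (phi : StepFun a b) :
  RiemannInt (StepFun_integrable phi) = RiemannInt_SF phi.
Proof.
  unfold RiemannInt. destruct (RiemannInt_exists _ _ _) as [l Hl].
  apply UL_sequence with (fun _ : nat => RiemannInt_SF phi); [exact Hl|].
  intros eps Heps. exists 0%nat. intros n _. unfold R_dist.
  rewrite Rminus_diag, Rabs_R0. lra.
Qed.

Lemma RiemannInt_SF_le_approx (h : R -> R) (a b : R) (prh : Riemann_integrable h a b)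
  (phi psi : StepFun a b) : a <= b ->
  (forall t, a <= t <= b -> phi t <= h t + psi t) ->
  RiemannInt_SF phi <= RiemannInt prh + RiemannInt_SF psi.
Proof.
  intros Hab Hle.
  rewrite <- (RiemannInt_StepFun phi), <- (RiemannInt_StepFun psi).
  pose (pr := RiemannInt_P10 1 prh (StepFun_integrable psi)).
  apply Rle_trans with (RiemannInt pr).
  - apply RiemannInt_P19; [exact Hab|]. intros x Hx. rewrite Rmult_1_l. apply Hle. lra.
  - rewrite (RiemannInt_P13 prh (StepFun_integrable psi) pr). lra.
Qed.

Lemma ex_RInt_squeeze (f : R -> R) (a b : R) : a <= b ->
  (forall eps, 0 < eps -> exists g h : R -> R,
     ex_RInt g a b /\ ex_RInt h a b /\
     (forall x, a <= x <= b -> Rabs (f x - g x) <= h x) /\ RInt h a b < eps) ->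
  ex_RInt f a b.
Proof.
  intros Hab H. apply ex_RInt_Reals_1. intro eps.
  assert (He4 : 0 < eps / 4) by (destruct eps; simpl; lra).
  destruct (constructive_indefinite_description _ (H _ He4)) as [g Hg'].
  destruct (constructive_indefinite_description _ Hg') as [h [Hg [Hh [Hfgh Hint]]]].
  destruct (ex_RInt_Reals_0 _ _ _ Hg (mkposreal _ He4)) as [phig [psig [Hg1 Hg2]]].
  pose (prh := ex_RInt_Reals_0 _ _ _ Hh).
  destruct (prh (mkposreal _ He4)) as [phih [psih [Hh1 Hh2]]].
  simpl in Hg2, Hh2.
  rewrite Rmin_left in Hg1, Hh1 by lra. rewrite Rmax_right in Hg1, Hh1 by lra.
  (* [f] is approximated by [phig] up to [psig + phih + psih], whose integral is
     at most [eps/4 + (RInt h + eps/4) + eps/4 < eps]. *)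
  exists phig.
  exists (mkStepFun (StepFun_P28 1 psig (mkStepFun (StepFun_P28 1 phih psih)))).
  assert (Hdom : forall t, a <= t <= b ->
    Rabs (f t - phig t) <= psig t + (phih t + psih t)).
  { intros t Ht. specialize (Hg1 t Ht). specialize (Hh1 t Ht).
    specialize (Hfgh t Ht). apply Rabs_le_between in Hh1.
    replace (f t - phig t) with ((f t - g t) + (g t - phig t)) by ring.
    eapply Rle_trans; [apply Rabs_triang|]. lra. }
  assert (Hphih : RiemannInt_SF phih <= RInt h a b + RiemannInt_SF psih).
  { rewrite (RInt_Reals h a b prh). apply RiemannInt_SF_le_approx; [exact Hab|].
    intros t Ht. specialize (Hh1 t Ht). apply Rabs_le_between in Hh1. lra. }
  assert (Hpos : 0 <= RiemannInt_SF
     (mkStepFun (StepFun_P28 1 psig (mkStepFun (StepFun_P28 1 phih psih))))).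
  { rewrite <- (Rmult_0_l (b - a)), <- (StepFun_P18 a b 0).
    apply StepFun_P37; [exact Hab|].
    intros x Hx. simpl. unfold fct_cte.
    pose proof (Hdom x ltac:(lra)). pose proof (Rabs_pos (f x - phig x)). lra. }
  split.
  - intros t Ht. rewrite Rmin_left in Ht by lra. rewrite Rmax_right in Ht by lra.
    simpl. rewrite !Rmult_1_l. exact (Hdom t Ht).
  - rewrite Rabs_pos_eq by exact Hpos.
    rewrite !StepFun_P30 in *. simpl in *.
    apply Rabs_lt_between in Hg2. apply Rabs_lt_between in Hh2.
    destruct eps; simpl in *. lra.
Qed.

Lemma incr_step_approx (n : nat) : forall (f : R -> R) (a b : R), a <= b ->
  (forall x y, a <= x -> x <= y -> y <= b -> f x <= f y) ->
  exists g h : R -> R, ex_RInt g a b /\ ex_RInt h a b /\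
     (forall x, a <= x <= b -> Rabs (f x - g x) <= h x) /\
     RInt h a b <= (b - a) * (f b - f a) / 2 ^ n.
Proof.
  induction n as [|n IH]; intros f a b Hab Hf.
  - exists (fun _ => f a), (fun _ => f b - f a).
    split; [apply ex_RInt_const|]. split; [apply ex_RInt_const|]. split.
    + intros x Hx. pose proof (Hf a x ltac:(lra) ltac:(lra) ltac:(lra)).
      pose proof (Hf x b ltac:(lra) ltac:(lra) ltac:(lra)).
      rewrite Rabs_pos_eq; lra.
    + rewrite RInt_const_R. simpl. lra.
  - set (c := (a + b) / 2). assert (Hc : a <= c <= b) by (unfold c; lra).
    destruct (IH f a c ltac:(lra)) as [g1 [h1 [Hg1 [Hh1 [B1 I1]]]]].
    { intros x y ? ? ?. apply Hf; lra. }
    destruct (IH f c b ltac:(lra)) as [g2 [h2 [Hg2 [Hh2 [B2 I2]]]]].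
    { intros x y ? ? ?. apply Hf; lra. }
    exists (glue c g1 g2), (glue c h1 h2).
    split; [apply ex_RInt_glue; auto|]. split; [apply ex_RInt_glue; auto|]. split.
    + intros x Hx. unfold glue. destruct (Rle_dec x c); [apply B1|apply B2]; lra.
    + rewrite RInt_glue by auto.
      pose proof (pow_lt 2 n ltac:(lra)).
      replace ((b - a) * (f b - f a) / 2 ^ S n)
        with ((c - a) * (f c - f a) / 2 ^ n + (b - c) * (f b - f c) / 2 ^ n)
        by (unfold c; simpl; field; lra).
      lra.
Qed.

Lemma INR_le_pow2 (n : nat) : INR n <= 2 ^ n.
Proof.
  induction n as [|n IH]; [simpl; lra|]. rewrite S_INR. simpl.
  pose proof (pow_R1_Rle 2 n ltac:(lra)). lra.
Qed.

Lemma ex_RInt_incr (f : R -> R) (a b : R) : a <= b ->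
  (forall x y, a <= x -> x <= y -> y <= b -> f x <= f y) -> ex_RInt f a b.
Proof.
  intros Hab Hf. apply ex_RInt_squeeze; [exact Hab|]. intros eps Heps.
  set (K := (b - a) * (f b - f a)).
  assert (HK : 0 <= K).
  { apply Rmult_le_pos; [lra|]. pose proof (Hf a b ltac:(lra) Hab ltac:(lra)). lra. }
  destruct (nfloor_ex (K / eps) ltac:(apply Rdiv_le_0_compat; lra)) as [n [_ Hn]].
  destruct (incr_step_approx (S n) f a b Hab Hf) as [g [h [Hg [Hh [B I]]]]].
  exists g, h. repeat split; auto.
  eapply Rle_lt_trans; [exact I|]. fold K.
  pose proof (INR_le_pow2 (S n)) as Hpow. rewrite S_INR in Hpow.
  pose proof (pow_lt 2 (S n) ltac:(lra)).
  apply Rmult_lt_reg_r with (2 ^ S n); [lra|].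
  unfold Rdiv. rewrite Rmult_assoc, Rinv_l, Rmult_1_r by lra.
  apply Rmult_lt_compat_l with (r := eps) in Hn; [|lra].
  replace (eps * (K / eps)) with K in Hn by (field; lra). nra.
Qed.

Lemma ex_RInt_decr (f : R -> R) (a b : R) : a <= b ->
  (forall x y, a <= x -> x <= y -> y <= b -> f y <= f x) -> ex_RInt f a b.
Proof.
  intros Hab Hf.
  apply ex_RInt_ext with (fun x => opp (- f x)).
  - intros x _. unfold opp; simpl. ring.
  - apply (ex_RInt_opp (fun x => - f x)), ex_RInt_incr; [exact Hab|].
    intros x y ? ? ?. specialize (Hf x y). lra.
Qed.

Lemma ex_RInt_bounded_left_end (f : R -> R) (a b M : R) : a < b ->
  (forall x, a <= x <= b -> Rabs (f x) <= M) ->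
  (forall c, a < c <= b -> ex_RInt f c b) -> ex_RInt f a b.
Proof.
  intros Hab HM Hc. apply ex_RInt_squeeze; [lra|]. intros eps Heps.
  set (M' := Rabs M + 1).
  assert (HM' : 0 < M') by (unfold M'; pose proof (Rabs_pos M); lra).
  set (d := Rmin (b - a) (eps / (2 * M'))).
  assert (Hd1 : d <= b - a) by apply Rmin_l.
  assert (Hd2 : d <= eps / (2 * M')) by apply Rmin_r.
  assert (Hd3 : 0 < d).
  { apply Rmin_glb_lt; [lra|]. apply Rdiv_lt_0_compat; lra. }
  set (c := a + d).
  exists (glue c (fun _ => 0) f), (glue c (fun _ => M') (fun _ => 0)).
  split; [apply ex_RInt_glue; [unfold c; lra|apply ex_RInt_const|apply Hc; unfold c; lra]|].
  split; [apply ex_RInt_glue; [unfold c; lra|apply ex_RInt_const|apply ex_RInt_const]|].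
  split.
  - intros x Hx. unfold glue. destruct (Rle_dec x c).
    + rewrite Rminus_0_r. specialize (HM x Hx). unfold M'.
      pose proof (Rle_abs M). lra.
    + rewrite Rminus_diag, Rabs_R0. lra.
  - rewrite RInt_glue by (unfold c; lra || apply ex_RInt_const).
    rewrite !RInt_const_R.
    assert (Hd : M' * (c - a) <= M' * (eps / (2 * M'))).
    { apply Rmult_le_compat_l; unfold c; lra. }
    replace (M' * (eps / (2 * M'))) with (eps / 2) in Hd by (field; lra). lra.
Qed.

Lemma is_RInt_inv_shift (p c b : R) : p < c -> c <= b ->
  is_RInt (fun t => / (t - p)) c b (ln (b - p) - ln (c - p)).
Proof.
  intros Hc Hb.
  apply (is_RInt_derive (fun t => ln (t - p)) (fun t => / (t - p))).
  - intros x Hx. rewrite Rmin_left in Hx by lra. rewrite Rmax_right in Hx by lra.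
    auto_derive; [lra|]. field. lra.
  - intros x Hx. rewrite Rmin_left in Hx by lra. rewrite Rmax_right in Hx by lra.
    apply (ex_derive_continuous (K:=R_AbsRing) (V:=R_NormedModule) (fun t => / (t - p))).
    auto_derive. lra.
Qed.

Lemma RInt_inv_shift (p c b : R) : p < c -> c <= b ->
  ex_RInt (fun t => / (t - p)) c b /\
  RInt (fun t => / (t - p)) c b = ln (b - p) - ln (c - p).
Proof.
  intros Hc Hb. pose proof (is_RInt_inv_shift p c b Hc Hb) as H. split.
  - eexists. exact H.
  - apply is_RInt_unique, H.
Qed.

(* The bound [/ Y] is used up to [p + Y], the bound [/ (t - p)] beyond. *)
Lemma RInt_le_min_inv (f : R -> R) (a b p Y : R) :
  0 < Y <= 1 -> p <= a <= b -> b - p <= 1 -> ex_RInt f a b ->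
  (forall t, a < t < b -> f t <= / Y) ->
  (forall t, a < t < b -> f t <= / (t - p)) ->
  RInt f a b <= 1 - ln Y.
Proof.
  intros [HY HY1] [Hpa Hab] Hbp Hf Hf1 Hf2.
  assert (HlnY : ln Y <= 0) by (rewrite <- ln_1; apply ln_le; lra).
  assert (Hsub : forall u v, a <= u -> u <= v -> v <= b -> ex_RInt f u v)
    by (intros; apply ex_RInt_subinterval with a b; auto).
  assert (Hflat : forall c, a <= c <= b -> c <= p + Y -> RInt f a c <= 1).
  { intros c Hc Hcm. apply Rle_trans with (RInt (fun _ => / Y) a c).
    - apply RInt_le; [lra|apply Hsub; lra|apply ex_RInt_const|].
      intros x Hx. apply Hf1. lra.
    - rewrite RInt_const_R. apply Rle_trans with (/ Y * Y); [|rewrite Rinv_l; lra].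
      apply Rmult_le_compat_l; [left; apply Rinv_0_lt_compat|]; lra. }
  destruct (Rle_dec b (p + Y)) as [Hb|Hb]; [pose proof (Hflat b); lra|].
  set (c := Rmax a (p + Y)).
  assert (Hc1 : a <= c) by apply Rmax_l. assert (Hc2 : p + Y <= c) by apply Rmax_r.
  assert (Hc3 : c <= b) by (apply Rmax_lub; lra).
  assert (Hac : RInt f a c <= 1).
  { destruct (Rle_dec a (p + Y)).
    - apply Hflat; unfold c; rewrite Rmax_right; lra.
    - unfold c. rewrite Rmax_left, RInt_point_R by lra. lra. }
  destruct (RInt_inv_shift p c b ltac:(lra) Hc3) as [Hie Hiv].
  assert (Hcb : RInt f c b <= ln (b - p) - ln (c - p)).
  { rewrite <- Hiv. apply RInt_le; [exact Hc3|apply Hsub; lra|exact Hie|].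
    intros x Hx. apply Hf2. lra. }
  assert (ln (b - p) <= 0) by (rewrite <- ln_1; apply ln_le; lra).
  assert (ln Y <= ln (c - p)) by (apply ln_le; lra).
  rewrite <- (RInt_Chasles_R f a c b) by (apply Hsub; lra).
  lra.
Qed.
(** * The blocks and the Hamiltonian *)

Definition knot (n : nat) : R := exp (- INR n).
Definition in_block (n : nat) (t : R) : Prop := knot (S n) < t <= knot n.
Definition even_ind (n : nat) : R := if Nat.even n then 1 else 0.

Lemma knot_pos (n : nat) : 0 < knot n.
Proof. apply exp_pos. Qed.

Lemma ln_knot (n : nat) : ln (knot n) = - INR n.
Proof. apply ln_exp. Qed.

Lemma knot_0 : knot 0 = 1.
Proof. unfold knot. simpl. rewrite Ropp_0. apply exp_0. Qed.

Lemma knot_add (m n : nat) : knot (m + n) = knot m * knot n.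
Proof. unfold knot. rewrite plus_INR, <- exp_plus. f_equal. ring. Qed.

Lemma knot_S_le_half (n : nat) : knot (S n) <= knot n / 2.
Proof.
  replace (S n) with (n + 1)%nat by lia. rewrite knot_add.
  assert (He : 2 < exp 1) by (pose proof (exp_ineq1 1 ltac:(lra)); lra).
  assert (H1 : knot 1 * exp 1 = 1).
  { unfold knot. simpl. rewrite <- exp_plus, Rplus_opp_l. apply exp_0. }
  pose proof (knot_pos n). pose proof (knot_pos 1). nra.
Qed.

Lemma knot_S_lt (n : nat) : knot (S n) < knot n.
Proof. pose proof (knot_S_le_half n). pose proof (knot_pos n). lra. Qed.

Lemma knot_S_le_gap (n : nat) : knot (S n) <= knot n - knot (S n).
Proof. pose proof (knot_S_le_half n). lra. Qed.

Lemma knot_antitone (m n : nat) : (m <= n)%nat -> knot n <= knot m.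
Proof.
  intros Hmn. induction Hmn as [|n _ IH]; [lra|].
  pose proof (knot_S_lt n). lra.
Qed.

Lemma knot_le_1 (n : nat) : knot n <= 1.
Proof. rewrite <- knot_0. apply knot_antitone. lia. Qed.

Lemma knot_lt_inv (m n : nat) : knot n < knot m -> (m < n)%nat.
Proof.
  intros H. destruct (Nat.le_gt_cases n m) as [Hle|Hlt]; [|exact Hlt].
  apply knot_antitone in Hle. lra.
Qed.

Lemma in_block_order (a b : nat) (s t : R) :
  in_block a s -> in_block b t -> s <= t -> (b <= a)%nat.
Proof.
  intros [Ha _] [_ Hb] Hst. assert (Hlt : knot (S a) < knot b) by lra.
  apply knot_lt_inv in Hlt. lia.
Qed.

Lemma in_block_unique (m n : nat) (t : R) : in_block m t -> in_block n t -> m = n.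
Proof.
  intros Hm Hn. pose proof (in_block_order m n t t Hm Hn (Rle_refl t)).
  pose proof (in_block_order n m t t Hn Hm (Rle_refl t)). lia.
Qed.

Lemma in_block_range (n : nat) (t : R) : in_block n t -> 0 < t <= 1.
Proof.
  intros [H1 H2]. pose proof (knot_pos (S n)). pose proof (knot_le_1 n). lra.
Qed.

Lemma in_block_exists (t : R) : 0 < t <= 1 -> exists n, in_block n t.
Proof.
  intros Ht. assert (Hln : 0 <= - ln t).
  { assert (ln t <= 0) by (rewrite <- ln_1; apply ln_le; lra). lra. }
  destruct (nfloor_ex _ Hln) as [n [Hn1 Hn2]]. exists n. unfold in_block, knot.
  rewrite S_INR. rewrite <- (exp_ln t) by lra. split.
  - apply exp_increasing. lra.
  - destruct (Rle_lt_or_eq_dec _ _ Hn1) as [Hlt|Heq].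
    + left. apply exp_increasing. lra.
    + right. f_equal. lra.
Qed.

Lemma in_block_double (k : nat) (t : R) : in_block (2 * k) t <->
  exp (- (2 * INR k + 1)) < t <= exp (- (2 * INR k)).
Proof.
  unfold in_block, knot. rewrite S_INR, mult_INR.
  replace (INR 2 * INR k) with (2 * INR k) by (simpl; ring). reflexivity.
Qed.

Lemma in_block_double_S (k : nat) (t : R) : in_block (2 * k + 1) t <->
  exp (- (2 * INR k + 2)) < t <= exp (- (2 * INR k + 1)).
Proof.
  unfold in_block, knot. rewrite S_INR, plus_INR, mult_INR.
  replace (INR 2 * INR k + INR 1 + 1) with (2 * INR k + 2) by (simpl; ring).
  replace (INR 2 * INR k + INR 1) with (2 * INR k + 1) by (simpl; ring). reflexivity.
Qed.

Lemma even_ind_cases (n : nat) : even_ind n = 0 \/ even_ind n = 1.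
Proof. unfold even_ind. destruct (Nat.even n); auto. Qed.

Lemma even_ind_S (n : nat) : even_ind (S n) = 1 - even_ind n.
Proof.
  unfold even_ind. rewrite Nat.even_succ, <- Nat.negb_even.
  destruct (Nat.even n); simpl; ring.
Qed.

Lemma even_ind_double (k : nat) : even_ind (2 * k) = 1.
Proof. unfold even_ind. rewrite Nat.even_mul. reflexivity. Qed.

Lemma hex1_on_block (n : nat) (t : R) : in_block n t -> hex1 t = even_ind n.
Proof.
  intros Hn. unfold hex1.
  destruct (excluded_middle_informative _) as [[k Hk]|Hnk].
  - apply in_block_double in Hk. rewrite (in_block_unique _ _ _ Hn Hk).
    symmetry. apply even_ind_double.
  - unfold even_ind. destruct (Nat.even n) eqn:E; [|reflexivity].
    apply Nat.even_spec in E. destruct E as [k ->].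
    exfalso. apply Hnk. exists k. apply in_block_double, Hn.
Qed.

Lemma hex2_on_block (n : nat) (t : R) : in_block n t -> hex2 t = 1 - even_ind n.
Proof.
  intros Hn. rewrite <- even_ind_S. unfold hex2.
  destruct (excluded_middle_informative _) as [[k Hk]|Hnk].
  - apply in_block_double_S in Hk. rewrite (in_block_unique _ _ _ Hn Hk).
    replace (S (2 * k + 1)) with (2 * S k)%nat by lia. symmetry. apply even_ind_double.
  - unfold even_ind. destruct (Nat.even (S n)) eqn:E; [|reflexivity].
    apply Nat.even_spec in E. destruct E as [k Hk]. destruct k as [|k]; [lia|].
    exfalso. apply Hnk. exists k. apply in_block_double_S.
    replace (2 * k + 1)%nat with n by lia. exact Hn.
Qed.

Lemma hex1_outside (t : R) : t <= 0 \/ 1 < t -> hex1 t = 0.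
Proof.
  intros Ht. unfold hex1. destruct (excluded_middle_informative _) as [[k Hk]|]; [|reflexivity].
  apply in_block_double, in_block_range in Hk. lra.
Qed.

Lemma hex2_outside (t : R) : t <= 0 \/ 1 < t -> hex2 t = 0.
Proof.
  intros Ht. unfold hex2. destruct (excluded_middle_informative _) as [[k Hk]|]; [|reflexivity].
  apply in_block_double_S, in_block_range in Hk. lra.
Qed.

Lemma hex1_bounds (t : R) : 0 <= hex1 t <= 1.
Proof. unfold hex1. destruct (excluded_middle_informative _); lra. Qed.

Lemma hex2_bounds (t : R) : 0 <= hex2 t <= 1.
Proof. unfold hex2. destruct (excluded_middle_informative _); lra. Qed.

(** * Primitives of block step functions and the determinant *)

Lemma ex_RInt_unit_of_blocks (f : R -> R) (M : R) :
  (forall x, 0 <= x <= 1 -> Rabs (f x) <= M) ->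
  (forall n a b, knot (S n) <= a -> a <= b -> b <= knot n -> ex_RInt f a b) ->
  ex_RInt f 0 1.
Proof.
  intros HM Hb. apply ex_RInt_bounded_left_end with M; [lra|exact HM|].
  assert (Hn : forall n, ex_RInt f (knot n) 1).
  { induction n as [|n IH].
    - rewrite knot_0. apply ex_RInt_point.
    - apply ex_RInt_Chasles with (knot n); [|exact IH].
      apply Hb with n; pose proof (knot_S_lt n); lra. }
  intros c Hc. destruct (in_block_exists c Hc) as [n [H1 H2]].
  apply ex_RInt_Chasles with (knot n); [|exact (Hn n)].
  apply Hb with n; lra.
Qed.

Lemma ex_RInt_supported_unit (h : R -> R) :
  (forall t, t <= 0 \/ 1 < t -> h t = 0) -> ex_RInt h 0 1 ->
  forall s t, ex_RInt h s t.
Proof.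
  intros Hout H01.
  assert (H0 : forall x, ex_RInt h 0 x).
  { intros x. destruct (Rle_dec x 0) as [Hx|Hx].
    - apply ex_RInt_swap, ex_RInt_const_on with 0; [lra|].
      intros z Hz. apply Hout. lra.
    - destruct (Rle_dec x 1) as [Hx1|Hx1].
      + apply ex_RInt_subinterval with 0 1; auto; lra.
      + apply ex_RInt_Chasles with 1; [exact H01|].
        apply ex_RInt_const_on with 0; [lra|]. intros z Hz. apply Hout. lra. }
  intros s t. apply ex_RInt_Chasles with 0; [apply ex_RInt_swap|]; apply H0.
Qed.

Lemma continuity_incr_lip (F : R -> R) :
  (forall s t, s <= t -> 0 <= F t - F s <= t - s) -> continuity F.
Proof.
  intros HF x eps Heps. exists eps. split; [exact Heps|].
  intros z [_ Hz]. simpl in *. unfold R_dist in *.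
  destruct (Rle_dec x z) as [Hxz|Hxz].
  - specialize (HF x z Hxz). rewrite Rabs_pos_eq in Hz by lra.
    rewrite Rabs_pos_eq by lra. lra.
  - specialize (HF z x ltac:(lra)). rewrite Rabs_left in Hz by lra.
    rewrite Rabs_left1 by lra. lra.
Qed.

Definition prim (h : R -> R) (t : R) : R := RInt h 0 t.

Lemma prim_0 (h : R -> R) : prim h 0 = 0.
Proof. apply RInt_point_R. Qed.

Record block_step (h : R -> R) (v : nat -> R) : Prop := {
  step_on_block : forall n t, in_block n t -> h t = v n;
  step_outside : forall t, t <= 0 \/ 1 < t -> h t = 0;
  step_bounds : forall t, 0 <= h t <= 1;
  step_value_nonneg : forall n, 0 <= v n;
  step_alternates : forall n, v n + v (S n) = 1 }.

Section Block_step.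
Context {h : R -> R} {v : nat -> R} (Hh : block_step h v).

Lemma block_step_const_on (n : nat) (a b : R) :
  knot (S n) <= a -> b <= knot n -> forall x, a < x < b -> h x = v n.
Proof. intros Ha Hb x Hx. apply (step_on_block _ _ Hh). unfold in_block. lra. Qed.

Lemma ex_RInt_block_step (s t : R) : ex_RInt h s t.
Proof.
  apply ex_RInt_supported_unit; [exact (step_outside _ _ Hh)|].
  apply ex_RInt_unit_of_blocks with 1.
  - intros x _. pose proof (step_bounds _ _ Hh x). rewrite Rabs_pos_eq; lra.
  - intros n a b Ha Hab Hb. apply ex_RInt_const_on with (v n); [exact Hab|].
    exact (block_step_const_on n a b Ha Hb).
Qed.

Lemma omega_prim (s t : R) : omega h s t = prim h t - prim h s.
Proof.
  unfold omega, prim.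
  pose proof (RInt_Chasles_R h 0 s t (ex_RInt_block_step _ _) (ex_RInt_block_step _ _)).
  unfold R_CompleteNormedModule in *. simpl in *. lra.
Qed.

Lemma prim_incr_lip (s t : R) : s <= t -> 0 <= prim h t - prim h s <= t - s.
Proof.
  intros Hst. rewrite <- omega_prim. unfold omega. split.
  - apply RInt_ge_0; [exact Hst|apply ex_RInt_block_step|].
    intros x _. apply (step_bounds _ _ Hh).
  - rewrite <- (Rmult_1_l (t - s)), <- RInt_const_R.
    apply RInt_le; [exact Hst|apply ex_RInt_block_step|apply ex_RInt_const|].
    intros x _. apply (step_bounds _ _ Hh).
Qed.

Lemma prim_on_block (n : nat) (s t : R) : knot (S n) <= s -> s <= t -> t <= knot n ->
  prim h t - prim h s = v n * (t - s).
Proof.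
  intros Hs Hst Ht. rewrite <- omega_prim. apply RInt_const_on; [exact Hst|].
  exact (block_step_const_on n s t Hs Ht).
Qed.

Lemma prim_continuous : continuity (prim h).
Proof. apply continuity_incr_lip. exact prim_incr_lip. Qed.

Lemma prim_two_blocks (n : nat) :
  knot (S (S n)) <= prim h (knot n) - prim h (knot (S (S n))).
Proof.
  pose proof (knot_S_lt n). pose proof (knot_S_lt (S n)).
  replace (prim h (knot n) - prim h (knot (S (S n)))) with
    ((prim h (knot n) - prim h (knot (S n)))
     + (prim h (knot (S n)) - prim h (knot (S (S n))))) by ring.
  rewrite (prim_on_block n), (prim_on_block (S n)) by lra.
  pose proof (knot_S_le_gap n). pose proof (knot_S_le_gap (S n)).
  pose proof (step_value_nonneg _ _ Hh n). pose proof (step_value_nonneg _ _ Hh (S n)).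
  pose proof (step_alternates _ _ Hh n). nra.
Qed.

Lemma prim_lower (t : R) : 0 < t <= 1 -> knot 3 * t <= prim h t.
Proof.
  intros Ht. destruct (in_block_exists t Ht) as [n [H1 H2]].
  pose proof (prim_two_blocks (S n)).
  pose proof (prim_incr_lip (knot (S n)) t ltac:(lra)).
  pose proof (prim_incr_lip 0 (knot (S (S (S n)))) ltac:(pose proof (knot_pos (S (S (S n)))); lra)).
  rewrite prim_0 in *.
  replace (S (S (S n))) with (n + 3)%nat in * by lia. rewrite knot_add in *.
  pose proof (knot_pos 3). nra.
Qed.

End Block_step.

Lemma hex1_step : block_step hex1 even_ind.
Proof.
  split.
  - exact hex1_on_block.
  - exact hex1_outside.
  - exact hex1_bounds.
  - intros n. destruct (even_ind_cases n) as [-> | ->]; lra.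
  - intros n. rewrite even_ind_S. ring.
Qed.

Lemma hex2_step : block_step hex2 (fun n => 1 - even_ind n).
Proof.
  split.
  - exact hex2_on_block.
  - exact hex2_outside.
  - exact hex2_bounds.
  - intros n. destruct (even_ind_cases n) as [-> | ->]; lra.
  - intros n. rewrite even_ind_S. ring.
Qed.

Notation F1 := (prim hex1).
Notation F2 := (prim hex2).

Definition Det (s t : R) : R := (F1 t - F1 s) * (F2 t - F2 s).

Lemma detOmega_Hex (s t : R) : detOmega Hex s t = Det s t.
Proof.
  unfold detOmega, Det, omega at 3. simpl.
  rewrite (omega_prim hex1_step), (omega_prim hex2_step), RInt_const_R. ring.
Qed.

Lemma Det_mono (s' s t t' : R) : s' <= s -> s <= t -> t <= t' -> Det s t <= Det s' t'.
Proof.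
  intros. unfold Det.
  pose proof (prim_incr_lip hex1_step s' s ltac:(lra)).
  pose proof (prim_incr_lip hex1_step s t ltac:(lra)).
  pose proof (prim_incr_lip hex1_step t t' ltac:(lra)).
  pose proof (prim_incr_lip hex2_step s' s ltac:(lra)).
  pose proof (prim_incr_lip hex2_step s t ltac:(lra)).
  pose proof (prim_incr_lip hex2_step t t' ltac:(lra)).
  apply Rmult_le_compat; lra.
Qed.

Lemma Det_le_sq (s t : R) : s <= t -> Det s t <= (t - s) ^ 2.
Proof.
  intros Hst. unfold Det.
  pose proof (prim_incr_lip hex1_step s t Hst). pose proof (prim_incr_lip hex2_step s t Hst).
  simpl. rewrite Rmult_1_r. apply Rmult_le_compat; lra.
Qed.

Lemma Det_diag (s : R) : Det s s = 0.
Proof. unfold Det. ring. Qed.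

Lemma Det_within_block (n : nat) (s t : R) :
  knot (S n) <= s -> s <= t -> t <= knot n -> Det s t = 0.
Proof.
  intros. unfold Det.
  rewrite (prim_on_block hex1_step n), (prim_on_block hex2_step n) by lra.
  destruct (even_ind_cases n) as [-> | ->]; ring.
Qed.

Lemma Det_across_knot (n : nat) (s t : R) :
  knot (S (S n)) <= s -> s <= knot (S n) -> knot (S n) <= t -> t <= knot n ->
  Det s t = (t - knot (S n)) * (knot (S n) - s).
Proof.
  intros. unfold Det.
  replace (F1 t - F1 s) with ((F1 t - F1 (knot (S n))) + (F1 (knot (S n)) - F1 s)) by ring.
  replace (F2 t - F2 s) with ((F2 t - F2 (knot (S n))) + (F2 (knot (S n)) - F2 s)) by ring.
  rewrite (prim_on_block hex1_step n), (prim_on_block hex2_step n),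
    (prim_on_block hex1_step (S n)), (prim_on_block hex2_step (S n)) by lra.
  rewrite even_ind_S. destruct (even_ind_cases n) as [-> | ->]; ring.
Qed.

Lemma Det_two_blocks_lower (n : nat) (s t : R) :
  s <= knot (S (S n)) -> knot n <= t -> knot (S n) * knot (S (S n)) <= Det s t.
Proof.
  intros Hs Ht. pose proof (knot_S_lt n). pose proof (knot_S_lt (S n)).
  apply Rle_trans with (Det (knot (S (S n))) (knot n)); [|apply Det_mono; lra].
  rewrite (Det_across_knot n) by lra.
  pose proof (knot_S_le_gap n). pose proof (knot_S_le_gap (S n)).
  pose proof (knot_pos (S n)). pose proof (knot_pos (S (S n))).
  apply Rmult_le_compat; lra.
Qed.

Lemma Det_origin_bounds (t : R) : 0 < t <= 1 -> (knot 3 * t) ^ 2 <= Det 0 t <= t ^ 2.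
Proof.
  intros Ht. split.
  - unfold Det. rewrite !prim_0, !Rminus_0_r.
    pose proof (prim_lower hex1_step t Ht). pose proof (prim_lower hex2_step t Ht).
    pose proof (knot_pos 3). simpl. rewrite Rmult_1_r. apply Rmult_le_compat; nra.
  - rewrite <- (Rminus_0_r t) at 2. apply Det_le_sq. lra.
Qed.

Lemma Det_continuous_r (s : R) : continuity (fun t => Det s t).
Proof.
  assert (Hc : forall c : R, continuity (fun _ => c)).
  { intros c. apply continuity_const. intros ? ?. reflexivity. }
  unfold Det. apply continuity_mult; apply continuity_minus; try apply Hc.
  - exact (prim_continuous hex1_step).
  - exact (prim_continuous hex2_step).
Qed.

Lemma Det_continuous_l (t : R) : continuity (fun s => Det s t).
Proof.
  assert (Hc : forall c : R, continuity (fun _ => c)).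
  { intros c. apply continuity_const. intros ? ?. reflexivity. }
  unfold Det. apply continuity_mult; apply continuity_minus; try apply Hc.
  - exact (prim_continuous hex1_step).
  - exact (prim_continuous hex2_step).
Qed.

Lemma IVT_interval (f : R -> R) (a b z : R) : continuity f -> a <= b ->
  Rmin (f a) (f b) <= z <= Rmax (f a) (f b) -> exists x, a <= x <= b /\ f x = z.
Proof.
  intros Hc Hab Hz. destruct (IVT_gen f a b z Hc Hz) as [x [Hx Hfx]].
  exists x. rewrite Rmin_left, Rmax_right in Hx by exact Hab. auto.
Qed.

(** * The algorithm *)

Definition block_index (t : R) : nat := epsilon (inhabits 0%nat) (fun n => in_block n t).

Lemma block_index_spec (t : R) : 0 < t <= 1 -> in_block (block_index t) t.
Proof. intros Ht. unfold block_index. apply epsilon_spec, in_block_exists, Ht. Qed.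

Lemma block_index_ln (t : R) : 0 < t <= 1 ->
  - ln t - 1 < INR (block_index t) <= - ln t.
Proof.
  intros Ht. destruct (block_index_spec t Ht) as [H1 H2].
  set (n := block_index t) in *. unfold knot in H1, H2.
  rewrite S_INR in H1. rewrite <- (exp_ln t) in H1, H2 by lra. split.
  - apply exp_lt_inv in H1. lra.
  - destruct (Rle_dec (INR n) (- ln t)) as [|Hn]; [assumption|].
    pose proof (exp_increasing (- INR n) (ln t) ltac:(lra)). lra.
Qed.

Lemma block_index_drop (s t : R) : 0 < s -> s <= t -> t <= 1 -> Det s t <> 0 ->
  (block_index t < block_index s)%nat.
Proof.
  intros Hs Hst Ht HD.
  pose proof (block_index_spec s ltac:(lra)) as Ba.
  pose proof (block_index_spec t ltac:(lra)) as Bb.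
  pose proof (in_block_order _ _ _ _ Ba Bb Hst).
  destruct (Nat.eq_dec (block_index t) (block_index s)) as [E|]; [|lia].
  exfalso. apply HD. rewrite E in Bb. destruct Ba, Bb.
  apply (Det_within_block (block_index s)); lra.
Qed.

Section Large_r.
Variable r : R.
Hypothesis r_large : exp 40 <= r.
Local Notation L := (ln r).
Local Notation y := (1 / r ^ 2).
Local Notation sg := (Defs.sigma Hex r).

Lemma ln_r_ge : 40 <= L.
Proof. rewrite <- (ln_exp 40). apply ln_le; [apply exp_pos|exact r_large]. Qed.

Lemma r_pos : 0 < r.
Proof. pose proof (exp_pos 40). lra. Qed.

Lemma y_sq : y = exp (- L) ^ 2.
Proof.
  pose proof r_pos. rewrite exp_Ropp, exp_ln by assumption. field. lra.
Qed.

Lemma y_exp : y = exp (- (2 * L)).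
Proof.
  rewrite y_sq. simpl. rewrite Rmult_1_r, <- exp_plus. f_equal. ring.
Qed.

Lemma y_pos : 0 < y.
Proof. rewrite y_exp. apply exp_pos. Qed.

Lemma y_lt_knot (k : nat) : INR k < 2 * L -> y < knot k.
Proof. intros Hk. rewrite y_exp. apply exp_increasing. lra. Qed.

Lemma knot_le_y (k : nat) : knot k <= y -> 2 * L <= INR k.
Proof.
  intros Hk. destruct (Rle_dec (2 * L) (INR k)) as [|Hn]; [assumption|].
  pose proof (y_lt_knot k ltac:(lra)). lra.
Qed.

Lemma y_lt_Det_0_1 : y < Det 0 1.
Proof.
  destruct (Det_origin_bounds 1 ltac:(lra)) as [Hlo _].
  eapply Rlt_le_trans; [|exact Hlo].
  replace ((knot 3 * 1) ^ 2) with (knot 6).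
  - apply y_lt_knot. simpl. pose proof ln_r_ge. lra.
  - replace 6%nat with (3 + 3)%nat by reflexivity. rewrite knot_add. ring.
Qed.

Lemma Det_origin_root_bounds (t : R) : 0 < t <= 1 -> Det 0 t = y ->
  exp (- L) <= t <= exp (3 - L).
Proof.
  intros Ht HD. destruct (Det_origin_bounds t Ht) as [Hlo Hup].
  rewrite HD, y_sq, <- !Rsqr_pow2 in Hlo, Hup. split.
  - apply Rsqr_incr_0_var; [exact Hup|lra].
  - apply Rsqr_incr_0_var in Hlo; [|left; apply exp_pos].
    replace (exp (3 - L)) with (exp (- L) / knot 3).
    + pose proof (knot_pos 3). apply Rmult_le_reg_l with (knot 3); [assumption|].
      field_simplify; lra.
    + unfold knot, Rdiv. rewrite <- exp_Ropp, <- exp_plus. f_equal. simpl. ring.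
Qed.

Definition passes (i : nat) : Prop := y < detOmega Hex (Defs.sigma Hex r i) 1.

Lemma sigma_S_spec (i : nat) : 0 <= sg i < 1 -> passes i ->
  sg i < sg (S i) < 1 /\ Det (sg i) (sg (S i)) = y.
Proof.
  intros Hi Hp. unfold passes in Hp.
  assert (Hroot : exists s, sg i < s < 1 /\ detOmega Hex (sg i) s = y).
  { rewrite detOmega_Hex in Hp.
    destruct (IVT_interval (fun t => Det (sg i) t) (sg i) 1 y (Det_continuous_r (sg i)))
      as [x [Hx Hfx]]; [lra| |].
    - rewrite Det_diag, Rmin_left, Rmax_right by (pose proof y_pos; lra).
      pose proof y_pos. lra.
    - exists x. rewrite detOmega_Hex. split; [|exact Hfx].
      split; apply Rnot_le_lt; intros Hle.
      + assert (x = sg i) by lra. subst x. rewrite Det_diag in Hfx. pose proof y_pos. lra.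
      + assert (x = 1) by lra. subst x. lra. }
  assert (Hs : sg (S i) = the_R (fun s => sg i < s < 1 /\ detOmega Hex (sg i) s = y)).
  { cbn [Defs.sigma]. destruct (Rlt_dec y (detOmega Hex (sg i) 1)); [reflexivity|contradiction]. }
  rewrite <- detOmega_Hex, Hs. unfold the_R. apply epsilon_spec, Hroot.
Qed.

Lemma sigma_chain (m : nat) : (forall i, (i < m)%nat -> passes i) ->
  forall i, (i < m)%nat ->
  0 <= sg i /\ sg i < sg (S i) < 1 /\ Det (sg i) (sg (S i)) = y.
Proof.
  intros Hp i. induction i as [|i IH]; intros Hi.
  - split; [simpl; lra|]. apply sigma_S_spec; [simpl; lra|apply Hp, Hi].
  - destruct (IH ltac:(lia)) as [H0 [H1 _]].
    split; [lra|]. apply sigma_S_spec; [lra|apply Hp, Hi].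
Qed.

Lemma sigma_chain_pos (m : nat) : (forall i, (i < m)%nat -> passes i) ->
  forall i, (1 <= i <= m)%nat -> 0 < sg i < 1.
Proof.
  intros Hp i Hi. destruct (sigma_chain m Hp (i - 1) ltac:(lia)) as [H0 [H1 _]].
  replace (S (i - 1)) with i in H1 by lia. lra.
Qed.

Lemma sigma_1_bounds (m : nat) : (1 <= m)%nat -> (forall i, (i < m)%nat -> passes i) ->
  0 < sg 1 < 1 /\ exp (- L) <= sg 1 <= exp (3 - L).
Proof.
  intros Hm Hp. destruct (sigma_chain m Hp 0 ltac:(lia)) as [_ [H1 HD]].
  simpl (sg 0) in H1, HD. split; [lra|]. apply Det_origin_root_bounds; [lra|exact HD].
Qed.

Lemma block_index_sigma_decr (m : nat) : (forall i, (i < m)%nat -> passes i) ->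
  forall i, (1 <= i <= m)%nat -> (block_index (sg i) + (i - 1) <= block_index (sg 1))%nat.
Proof.
  intros Hp i. induction i as [|i IH]; intros Hi; [lia|].
  destruct (Nat.eq_dec i 0) as [->|Hne]; [simpl; lia|].
  destruct (sigma_chain m Hp i ltac:(lia)) as [_ [Hlt HD]].
  pose proof (sigma_chain_pos m Hp i ltac:(lia)).
  assert (block_index (sg (S i)) < block_index (sg i))%nat.
  { apply block_index_drop; try lra. rewrite HD. pose proof y_pos. lra. }
  specialize (IH ltac:(lia)). lia.
Qed.

Lemma sigma_chain_length (m : nat) : (1 <= m)%nat ->
  (forall i, (i < m)%nat -> passes i) -> INR m <= L + 1.
Proof.
  intros Hm Hp. destruct (sigma_1_bounds m Hm Hp) as [H01 [Hlo _]].
  pose proof (block_index_ln (sg 1) ltac:(lra)) as [_ Hb].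
  assert (- L <= ln (sg 1)) by (rewrite <- (ln_exp (- L)); apply ln_le; [apply exp_pos|exact Hlo]).
  pose proof (block_index_sigma_decr m Hp m ltac:(lia)) as Hd.
  apply le_INR in Hd. rewrite plus_INR, minus_INR in Hd by lia. change (INR 1) with 1 in Hd.
  pose proof (pos_INR (block_index (sg m))). lra.
Qed.

Lemma block_index_sigma_step (m i : nat) : (forall j, (j < m)%nat -> passes j) ->
  (1 <= i)%nat -> (S i <= m)%nat ->
  INR (block_index (sg i)) - 2 <= INR (block_index (sg (S i)))
  \/ L - 5/2 <= INR (block_index (sg (S i))).
Proof.
  intros Hp Hi Him.
  destruct (sigma_chain m Hp i ltac:(lia)) as [_ [Hlt HD]].
  pose proof (sigma_chain_pos m Hp i ltac:(lia)).
  set (a := block_index (sg i)). set (b := block_index (sg (S i))).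
  destruct (Nat.le_gt_cases a (b + 2)) as [Hab|Hab].
  - left. apply le_INR in Hab. rewrite plus_INR in Hab. simpl in Hab. lra.
  - right. destruct (block_index_spec (sg i) ltac:(lra)) as [_ Ha].
    destruct (block_index_spec (sg (S i)) ltac:(lra)) as [Hb _]. fold a b in Ha, Hb.
    pose proof (knot_antitone (S (S (S b))) a ltac:(lia)).
    pose proof (Det_two_blocks_lower (S b) (sg i) (sg (S i)) ltac:(lra) ltac:(lra)) as Hl.
    rewrite HD, <- knot_add in Hl. apply knot_le_y in Hl.
    rewrite plus_INR, !S_INR in Hl. lra.
Qed.

Lemma block_index_sigma_lower (m : nat) : (1 <= m)%nat -> (forall j, (j < m)%nat -> passes j) ->
  forall i, (1 <= i <= m)%nat -> L - 4 - 2 * (INR i - 1) <= INR (block_index (sg i)).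
Proof.
  intros Hm Hp i. induction i as [|i IH]; intros Hi; [lia|].
  destruct (Nat.eq_dec i 0) as [->|Hne].
  - destruct (sigma_1_bounds m Hm Hp) as [H01 [_ Hup]].
    pose proof (block_index_ln (sg 1) ltac:(lra)) as [Hb _].
    assert (ln (sg 1) <= 3 - L) by (rewrite <- (ln_exp (3 - L)); apply ln_le; lra).
    change (INR 1) with 1. lra.
  - specialize (IH ltac:(lia)). rewrite S_INR.
    pose proof (le_INR 1 i ltac:(lia)) as Hi1. simpl in Hi1.
    destruct (block_index_sigma_step m i Hp ltac:(lia) ltac:(lia)); lra.
Qed.

Lemma kappa_spec_exists : exists k, kappa_spec Hex r k.
Proof.
  assert (Hstop : exists n, ~ passes n).
  { destruct (nfloor_ex (L + 1) ltac:(pose proof ln_r_ge; lra)) as [n [_ Hn]].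
    apply not_all_ex_not. intros Hall.
    pose proof (sigma_chain_length (S n) ltac:(lia) (fun i _ => Hall i)) as Hlen.
    rewrite S_INR in Hlen. lra. }
  destruct (dec_inh_nat_subset_has_unique_least_element (fun n => ~ passes n))
    as [n [[Hn Hmin] _]]; [intros n; apply classic|exact Hstop|].
  exists (S n). split; [lia|]. simpl. rewrite Nat.sub_0_r. split; [exact Hn|].
  intros i Hi. apply NNPP. intros Hi'. specialize (Hmin i Hi'). lia.
Qed.

Lemma kappa_upper (k : nat) : kappa_spec Hex r k -> INR k <= 2 * L.
Proof.
  intros [Hk1 [_ Hk3]]. pose proof ln_r_ge.
  destruct (Nat.eq_dec k 1) as [->|Hne]; [simpl; lra|].
  pose proof (sigma_chain_length (k - 1) ltac:(lia) Hk3) as Hlen.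
  rewrite minus_INR in Hlen by lia. simpl in Hlen. lra.
Qed.

Lemma kappa_lower (k : nat) : kappa_spec Hex r k -> L / 4 <= INR k.
Proof.
  intros [Hk1 [Hk2 Hk3]]. pose proof ln_r_ge.
  destruct (Nat.eq_dec k 1) as [->|Hne].
  { exfalso. apply Hk2. simpl. rewrite detOmega_Hex. exact y_lt_Det_0_1. }
  set (m := (k - 1)%nat) in *.
  pose proof (block_index_sigma_lower m ltac:(lia) Hk3 m ltac:(lia)) as Hl.
  pose proof (sigma_chain_pos m Hk3 m ltac:(lia)) as Hm.
  (* otherwise [(sg m, 1)] spans the two blocks around [knot 1] *)
  assert (Hlast : (block_index (sg m) <= 1)%nat).
  { destruct (Nat.le_gt_cases (block_index (sg m)) 1) as [|Hgt]; [assumption|].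
    exfalso. apply Hk2. rewrite detOmega_Hex.
    destruct (block_index_spec (sg m) ltac:(lra)) as [_ Hb].
    pose proof (knot_antitone 2 (block_index (sg m)) ltac:(lia)).
    pose proof (Det_two_blocks_lower 0 (sg m) 1 ltac:(lra) ltac:(rewrite knot_0; lra)) as HD.
    rewrite <- knot_add in HD. eapply Rlt_le_trans; [|exact HD].
    apply y_lt_knot. simpl. lra. }
  apply le_INR in Hlast. simpl in Hlast.
  assert (INR k = INR m + 1) by (unfold m; rewrite minus_INR by lia; simpl; ring).
  lra.
Qed.

(** * The function K_H *)

Local Notation th := (t_hat Hex r).
Local Notation sh := (s_hat Hex r).
Local Notation K := (K_H Hex r).

Lemma t_hat_spec : 0 < th < 1 /\ Det 0 th = y.
Proof.
  pose proof y_pos. pose proof y_lt_Det_0_1.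
  assert (Hroot : exists t, 0 <= t <= 1 /\ detOmega Hex 0 t = y).
  { destruct (IVT_interval (fun t => Det 0 t) 0 1 y (Det_continuous_r 0)) as [x [Hx Hfx]];
      [lra| |].
    - rewrite Det_diag, Rmin_left, Rmax_right by lra. lra.
    - exists x. rewrite detOmega_Hex. auto. }
  assert (Hs : 0 <= th <= 1 /\ detOmega Hex 0 th = y)
    by (unfold t_hat, the_R; apply epsilon_spec, Hroot).
  rewrite detOmega_Hex in Hs. destruct Hs as [Hth HD].
  split; [|exact HD]. split; apply Rnot_le_lt; intros Hle.
  - replace th with 0 in HD by lra. rewrite Det_diag in HD. lra.
  - replace th with 1 in HD by lra. lra.
Qed.

Lemma t_hat_bounds : exp (- L) <= th <= exp (3 - L).
Proof. destruct t_hat_spec as [H1 H2]. apply Det_origin_root_bounds; [lra|exact H2]. Qed.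

Lemma t_hat_le_knot (n : nat) : INR (2 * n + 3) < 2 * L -> th <= knot n.
Proof.
  intros Hn. destruct t_hat_spec as [Hth HD].
  apply Rnot_lt_le. intros Hlt.
  pose proof (knot_pos (S (S n))).
  pose proof (Det_two_blocks_lower n 0 th ltac:(lra) ltac:(lra)) as Hl.
  rewrite HD, <- knot_add in Hl. apply knot_le_y in Hl.
  replace (S n + S (S n))%nat with (2 * n + 3)%nat in Hl by lia. lra.
Qed.

Lemma s_hat_spec (t : R) : th <= t <= 1 -> 0 <= sh t <= t /\ Det (sh t) t = y.
Proof.
  intros Ht. destruct t_hat_spec as [Hth HD]. pose proof y_pos.
  assert (Hroot : exists s, 0 <= s <= t /\ detOmega Hex s t = y).
  { destruct (IVT_interval (fun s => Det s t) 0 t y (Det_continuous_l t)) as [x [Hx Hfx]];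
      [lra| |].
    - assert (y <= Det 0 t) by (rewrite <- HD; apply Det_mono; lra).
      rewrite Det_diag, Rmin_right, Rmax_left by lra. lra.
    - exists x. rewrite detOmega_Hex. auto. }
  assert (Hs : 0 <= sh t <= t /\ detOmega Hex (sh t) t = y)
    by (unfold s_hat, the_R; apply epsilon_spec, Hroot).
  rewrite detOmega_Hex in Hs. exact Hs.
Qed.

Lemma s_hat_factors (t : R) : th <= t <= 1 ->
  0 < F1 t - F1 (sh t) /\ 0 < F2 t - F2 (sh t) /\
  (F1 t - F1 (sh t)) * (F2 t - F2 (sh t)) = y /\ F2 t - F2 (sh t) <= 1.
Proof.
  intros Ht. destruct (s_hat_spec t Ht) as [Hs HD]. unfold Det in HD.
  pose proof (prim_incr_lip hex1_step (sh t) t ltac:(lra)).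
  pose proof (prim_incr_lip hex2_step (sh t) t ltac:(lra)).
  pose proof y_pos.
  assert (F1 t - F1 (sh t) <> 0) by (intro E; rewrite E in HD; lra).
  assert (F2 t - F2 (sh t) <> 0) by (intro E; rewrite E in HD; lra).
  repeat split; lra.
Qed.

Lemma s_hat_le_knot (n : nat) (t : R) : in_block n t -> th <= t <= 1 -> sh t <= knot (S n).
Proof.
  intros [Hn1 Hn2] Ht. destruct (s_hat_spec t Ht) as [Hs HD]. pose proof y_pos.
  apply Rnot_lt_le. intros Hlt.
  rewrite (Det_within_block n (sh t) t) in HD by lra. lra.
Qed.

Lemma ind_in (P : R -> Prop) (t : R) : P t -> Defs.ind P t = 1.
Proof. intros. unfold Defs.ind. destruct (excluded_middle_informative (P t)); tauto. Qed.

Lemma ind_out (P : R -> Prop) (t : R) : ~ P t -> Defs.ind P t = 0.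
Proof. intros. unfold Defs.ind. destruct (excluded_middle_informative (P t)); tauto. Qed.

Lemma K_below_t_hat (t : R) : 0 <= t < th -> K t = / y * F2 t * hex1 t.
Proof.
  intros Ht. unfold K_H. simpl h1; simpl h2; simpl h3.
  rewrite ind_in, ind_out, Rmult_0_l, Rplus_0_r by lra.
  rewrite (omega_prim hex2_step), prim_0. unfold omega. rewrite RInt_const_R.
  pose proof r_pos. field. lra.
Qed.

Lemma K_above_t_hat (t : R) : th <= t < 1 -> K t = hex1 t / (F1 t - F1 (sh t)).
Proof.
  intros Ht. unfold K_H. simpl h1; simpl h2; simpl h3.
  rewrite ind_out, ind_in by lra. rewrite (omega_prim hex1_step). ring.
Qed.

Lemma K_above_t_hat_alt (t : R) : th <= t < 1 -> K t = / y * hex1 t * (F2 t - F2 (sh t)).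
Proof.
  intros Ht. rewrite K_above_t_hat by exact Ht.
  destruct (s_hat_factors t ltac:(lra)) as [HA [HB [HAB _]]].
  rewrite <- HAB. field. split; lra.
Qed.

Lemma K_at_1 : K 1 = 0.
Proof.
  destruct t_hat_spec as [Hth _]. unfold K_H. rewrite !ind_out by lra. ring.
Qed.

Lemma K_bounds (t : R) : 0 <= t <= 1 -> 0 <= K t <= / y.
Proof.
  intros Ht. pose proof y_pos. pose proof (hex1_bounds t).
  assert (0 < / y) by (apply Rinv_0_lt_compat; lra).
  assert (Hprod : forall u, 0 <= u <= 1 -> 0 <= / y * hex1 t * u <= / y).
  { intros u Hu. split; [apply Rmult_le_pos; [apply Rmult_le_pos|]; lra|].
    rewrite Rmult_assoc. rewrite <- (Rmult_1_r (/ y)) at 2.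
    apply Rmult_le_compat_l; [lra|]. nra. }
  destruct (Rlt_le_dec t th) as [Hlo|Hhi].
  - rewrite K_below_t_hat by lra.
    pose proof (prim_incr_lip hex2_step 0 t ltac:(lra)) as HF2. rewrite prim_0 in HF2.
    replace (/ y * F2 t * hex1 t) with (/ y * hex1 t * F2 t) by ring. apply Hprod. lra.
  - destruct (Req_dec t 1) as [->|Ht1]; [rewrite K_at_1; lra|].
    rewrite K_above_t_hat_alt by lra. apply Hprod.
    destruct (s_hat_factors t ltac:(lra)) as [_ [HB [_ HB1]]]. lra.
Qed.

Lemma K_on_odd_block (n : nat) (t : R) : in_block n t -> even_ind n = 0 -> K t = 0.
Proof.
  intros Hn He. pose proof (in_block_range n t Hn) as Ht.
  destruct (Rlt_le_dec t th) as [H1|H1].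
  - rewrite K_below_t_hat, (hex1_on_block n t Hn), He by lra. ring.
  - destruct (Req_dec t 1) as [->|Ht1]; [apply K_at_1|].
    rewrite K_above_t_hat_alt, (hex1_on_block n t Hn), He by lra. ring.
Qed.

(* On an even block [F2] is flat, so the window [(sh t, t)] can only widen in [F1]. *)
Lemma s_hat_width_incr (n : nat) (x z : R) : even_ind n = 1 ->
  knot (S n) <= x -> x <= z -> z <= knot n -> th <= x -> z <= 1 ->
  F1 x - F1 (sh x) <= F1 z - F1 (sh z).
Proof.
  intros He Hx Hxz Hz Hth Hz1.
  destruct (s_hat_factors x ltac:(lra)) as [A1 [B1 [AB1 _]]].
  destruct (s_hat_factors z ltac:(lra)) as [A2 [B2 [AB2 _]]].
  apply Rnot_lt_le. intros Hlt.
  assert (HF2 : F2 z - F2 x = 0).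
  { rewrite (prim_on_block hex2_step n x z) by lra. rewrite He. ring. }
  assert (HB : F2 x - F2 (sh x) < F2 z - F2 (sh z)).
  { apply Rnot_le_lt. intros Hle.
    assert ((F1 z - F1 (sh z)) * (F2 z - F2 (sh z)) < (F1 x - F1 (sh x)) * (F2 x - F2 (sh x))).
    { apply Rlt_le_trans with ((F1 x - F1 (sh x)) * (F2 z - F2 (sh z))).
      - apply Rmult_lt_compat_r; lra.
      - apply Rmult_le_compat_l; lra. }
    lra. }
  assert (Hs : sh z < sh x).
  { apply Rnot_le_lt. intros Hle. pose proof (prim_incr_lip hex2_step (sh x) (sh z) Hle). lra. }
  pose proof (prim_incr_lip hex1_step (sh z) (sh x) ltac:(lra)).
  pose proof (prim_incr_lip hex1_step x z Hxz). lra.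
Qed.

Lemma ex_RInt_K_within_block (n : nat) (a b : R) :
  knot (S n) <= a -> a <= b -> b <= knot n -> ex_RInt K a b.
Proof.
  intros Ha Hab Hb. pose proof (knot_le_1 n). pose proof (knot_pos (S n)).
  destruct (even_ind_cases n) as [He|He].
  { apply ex_RInt_const_on with 0; [exact Hab|].
    intros x Hx. apply (K_on_odd_block n x); [unfold in_block; lra|exact He]. }
  assert (Hlow : forall a' b', a <= a' -> a' <= b' -> b' <= b -> b' <= th -> ex_RInt K a' b').
  { intros a' b' H1 H2 H3 H4. apply ex_RInt_const_on with (/ y * F2 a'); [exact H2|].
    intros x Hx.
    pose proof (prim_on_block hex2_step n a' x ltac:(lra) ltac:(lra) ltac:(lra)) as HF.
    cbv beta in HF. rewrite He in HF.
    rewrite K_below_t_hat, (hex1_on_block n x), He by (unfold in_block; lra).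
    replace (F2 x) with (F2 a') by lra. ring. }
  assert (Hhigh : forall a' b', a <= a' -> a' <= b' -> b' <= b -> th <= a' -> ex_RInt K a' b').
  { intros a' b' H1 H2 H3 H4.
    apply ex_RInt_ext with (fun t => / (F1 t - F1 (sh t))).
    - intros x Hx. apply open_interval_ordered in Hx; [|exact H2].
      rewrite K_above_t_hat, (hex1_on_block n x), He by (unfold in_block; lra).
      symmetry. apply Rmult_1_l.
    - apply ex_RInt_decr; [exact H2|]. intros x z Hx Hxz Hz.
      destruct (s_hat_factors x ltac:(lra)) as [A1 _].
      apply Rinv_le_contravar; [exact A1|].
      apply (s_hat_width_incr n); lra. }
  destruct (Rle_dec b th) as [Hbt|Hbt]; [apply Hlow; lra|].
  destruct (Rle_dec th a) as [Hat|Hat]; [apply Hhigh; lra|].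
  apply ex_RInt_Chasles with th; [apply Hlow|apply Hhigh]; lra.
Qed.

Lemma ex_RInt_K (a b : R) : 0 <= a -> a <= b -> b <= 1 -> ex_RInt K a b.
Proof.
  intros Ha Hab Hb. apply ex_RInt_subinterval with 0 1; auto.
  apply ex_RInt_unit_of_blocks with (/ y); [|exact ex_RInt_K_within_block].
  intros x Hx. destruct (K_bounds x Hx). rewrite Rabs_pos_eq; assumption.
Qed.

Lemma ln_y : ln y = - (2 * L).
Proof. rewrite y_exp. apply ln_exp. Qed.

Lemma K_le_inv_shift (n : nat) (t : R) : even_ind n = 1 -> in_block n t -> th <= t < 1 ->
  K t <= / (t - knot (S n)).
Proof.
  intros He Hn Ht. pose proof (s_hat_le_knot n t Hn ltac:(lra)) as Hs.
  rewrite K_above_t_hat, (hex1_on_block n t Hn), He by exact Ht.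
  destruct (s_hat_factors t ltac:(lra)) as [HA _]. destruct Hn as [Hn1 Hn2].
  pose proof (prim_on_block hex1_step n (knot (S n)) t ltac:(lra) ltac:(lra) Hn2) as HF.
  rewrite He in HF.
  pose proof (prim_incr_lip hex1_step (sh t) (knot (S n)) Hs).
  unfold Rdiv. rewrite Rmult_1_l. apply Rinv_le_contravar; lra.
Qed.

Lemma RInt_K_block_above_t_hat (n : nat) :
  RInt K (Rmax th (knot (S n))) (Rmax th (knot n)) <= 1 + 2 * L.
Proof.
  pose proof (knot_S_lt n). pose proof (knot_le_1 n). pose proof (knot_pos (S n)).
  pose proof ln_r_ge. destruct t_hat_spec as [Hth _].
  destruct (Rle_dec (knot n) th) as [Hle|Hle].
  { rewrite !Rmax_left, RInt_point_R by lra. lra. }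
  rewrite (Rmax_right th (knot n)) by lra.
  set (a := Rmax th (knot (S n))).
  assert (Ha1 : th <= a) by apply Rmax_l. assert (Ha2 : knot (S n) <= a) by apply Rmax_r.
  assert (Ha3 : a <= knot n) by (apply Rmax_lub; lra).
  destruct (even_ind_cases n) as [He|He].
  - rewrite (RInt_const_on K a (knot n) 0); [lra|lra|].
    intros x Hx. apply (K_on_odd_block n x); [unfold in_block; lra|exact He].
  - replace (1 + 2 * L) with (1 - ln y) by (rewrite ln_y; ring).
    pose proof y_pos. pose proof (y_lt_knot 0 ltac:(simpl; lra)). rewrite knot_0 in *.
    apply RInt_le_min_inv with (knot (S n)); [lra|lra|lra|apply ex_RInt_K; lra| |].
    + intros t Ht. apply K_bounds. lra.
    + intros t Ht. apply K_le_inv_shift; [exact He|unfold in_block; lra|lra].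
Qed.

Lemma RInt_K_above_t_hat_blocks (n : nat) :
  RInt K (Rmax th (knot n)) 1 <= INR n * (1 + 2 * L).
Proof.
  destruct t_hat_spec as [Hth _]. pose proof ln_r_ge.
  induction n as [|n IH].
  - rewrite knot_0, Rmax_right, RInt_point_R by lra. simpl. lra.
  - pose proof (knot_S_lt n). pose proof (knot_le_1 n).
    assert (Hord : th <= Rmax th (knot (S n)) <= Rmax th (knot n)).
    { split; [apply Rmax_l|]. apply Rmax_lub; [apply Rmax_l|].
      eapply Rle_trans; [left; eassumption|apply Rmax_r]. }
    assert (Hle1 : Rmax th (knot n) <= 1) by (apply Rmax_lub; lra).
    rewrite <- (RInt_Chasles_R K _ (Rmax th (knot n)) 1) by (apply ex_RInt_K; lra).
    pose proof (RInt_K_block_above_t_hat n). rewrite S_INR. lra.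
Qed.

Lemma exp_6_le : exp 6 <= 729.
Proof.
  replace 6 with (1 + 1 + 1 + 1 + 1 + 1) by ring. rewrite !exp_plus.
  pose proof exp_le_3. pose proof (exp_pos 1).
  assert (exp 1 * exp 1 <= 9) by nra.
  assert (exp 1 * exp 1 * exp 1 <= 27) by nra.
  assert (exp 1 * exp 1 * exp 1 * exp 1 <= 81) by nra.
  assert (exp 1 * exp 1 * exp 1 * exp 1 * exp 1 <= 243) by nra. nra.
Qed.

Lemma RInt_K_below_t_hat : RInt K 0 th <= exp 6.
Proof.
  destruct t_hat_spec as [Hth _]. destruct t_hat_bounds as [_ Hup]. pose proof y_pos.
  apply Rle_trans with (RInt (fun _ => / y * th) 0 th).
  - apply RInt_le; [lra|apply ex_RInt_K; lra|apply ex_RInt_const|].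
    intros x Hx. rewrite K_below_t_hat by lra.
    pose proof (prim_incr_lip hex2_step 0 x ltac:(lra)) as HF2. rewrite prim_0 in HF2.
    pose proof (hex1_bounds x). assert (0 < / y) by (apply Rinv_0_lt_compat; lra).
    rewrite Rmult_assoc. apply Rmult_le_compat_l; [lra|]. nra.
  - rewrite RInt_const_R, y_exp, <- exp_Ropp, Ropp_involutive, Rminus_0_r.
    replace (exp 6) with (exp (2 * L) * (exp (3 - L) * exp (3 - L)))
      by (rewrite <- !exp_plus; f_equal; ring).
    rewrite Rmult_assoc. apply Rmult_le_compat_l; [left; apply exp_pos|].
    apply Rmult_le_compat; lra.
Qed.

Lemma RInt_K_upper : RInt K 0 1 <= 4 * L ^ 2.
Proof.
  destruct t_hat_spec as [Hth _]. destruct t_hat_bounds as [Hlo _]. pose proof ln_r_ge.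
  rewrite <- (RInt_Chasles_R K 0 th 1) by (apply ex_RInt_K; lra).
  pose proof RInt_K_below_t_hat. pose proof exp_6_le.
  destruct (block_index_spec th ltac:(lra)) as [Hb _].
  destruct (block_index_ln th ltac:(lra)) as [_ Hl].
  assert (- L <= ln th) by (rewrite <- (ln_exp (- L)); apply ln_le; [apply exp_pos|exact Hlo]).
  pose proof (RInt_K_above_t_hat_blocks (S (block_index th))) as Hc.
  rewrite Rmax_left, S_INR in Hc by lra.
  assert (RInt K th 1 <= (L + 1) * (1 + 2 * L))
    by (eapply Rle_trans; [exact Hc|apply Rmult_le_compat_r; lra]).
  nra.
Qed.

Lemma s_hat_ge_knot (n : nat) (t : R) : in_block n t -> th <= t <= 1 ->
  y < (t - knot (S n)) * (knot (S n) - knot (S (S n))) -> knot (S (S n)) <= sh t.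
Proof.
  intros [Hn1 Hn2] Ht Hy. destruct (s_hat_spec t Ht) as [Hs HD].
  pose proof (knot_S_lt (S n)).
  apply Rnot_lt_le. intros Hlt.
  pose proof (Det_mono (sh t) (knot (S (S n))) t t ltac:(lra) ltac:(lra) ltac:(lra)) as Hm.
  rewrite (Det_across_knot n) in Hm by lra. lra.
Qed.

Lemma K_ge_inv_shift (n : nat) (t : R) : even_ind n = 1 -> in_block n t -> th <= t < 1 ->
  y < (t - knot (S n)) * (knot (S n) - knot (S (S n))) -> / (t - knot (S n)) <= K t.
Proof.
  intros He Hn Ht Hy. pose proof (s_hat_ge_knot n t Hn ltac:(lra) Hy) as Hs.
  rewrite K_above_t_hat, (hex1_on_block n t Hn), He by exact Ht.
  destruct (s_hat_factors t ltac:(lra)) as [HA _]. destruct Hn as [Hn1 Hn2].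
  pose proof (knot_S_lt (S n)).
  pose proof (prim_on_block hex1_step n (knot (S n)) t ltac:(lra) ltac:(lra) Hn2) as HF1.
  pose proof (prim_on_block hex1_step (S n) (knot (S (S n))) (knot (S n))
    ltac:(lra) ltac:(lra) ltac:(lra)) as HF2.
  rewrite even_ind_S, He in HF2. rewrite He in HF1.
  pose proof (prim_incr_lip hex1_step (knot (S (S n))) (sh t) Hs).
  unfold Rdiv. rewrite Rmult_1_l. apply Rinv_le_contravar; [lra|].
  assert (0 < t - knot (S n)) by lra. lra.
Qed.

(* Beyond [a], [sh t] stays in block [S n], so that [K t >= / (t - knot (S n))]. *)
Lemma RInt_K_even_block_lower (n : nat) : even_ind n = 1 -> INR (2 * n + 5) < 2 * L ->
  let a := knot (S n) + y / (knot (S n) - knot (S (S n))) in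
  knot (S (S n)) <= a < knot n /\ 2 * L - INR (2 * n + 3) <= RInt K a (knot n).
Proof.
  intros He HL a.
  pose proof y_pos. pose proof (knot_le_1 n). pose proof (knot_pos (S (S n))).
  pose proof (knot_S_le_gap n). pose proof (knot_S_le_gap (S n)).
  pose proof (knot_S_lt n). pose proof (knot_S_lt (S n)).
  assert (Hth : th <= knot (S n))
    by (apply t_hat_le_knot; replace (2 * S n + 3)%nat with (2 * n + 5)%nat by lia; exact HL).
  assert (Hp : knot (S n) * knot (S (S n)) = knot (2 * n + 3))
    by (rewrite <- knot_add; f_equal; lia).
  assert (Hy : y < knot (S n) * knot (S (S n))).
  { rewrite Hp. apply y_lt_knot.
    apply Rle_lt_trans with (INR (2 * n + 5)); [apply le_INR; lia|exact HL]. }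
  set (p1 := knot (S n)) in *. set (p2 := knot (S (S n))) in *.
  assert (Hu1 : y / (p1 - p2) * (p1 - p2) = y) by (pose proof r_pos; field; repeat split; lra).
  assert (Hu0 : 0 < y / (p1 - p2)) by (apply Rdiv_lt_0_compat; lra).
  assert (Hu2 : y / (p1 - p2) < knot n - p1).
  { apply Rmult_lt_reg_r with (p1 - p2); [lra|]. rewrite Hu1.
    apply Rlt_le_trans with (p1 * p2); [exact Hy|]. apply Rmult_le_compat; lra. }
  split; [unfold a; lra|].
  destruct (RInt_inv_shift p1 a (knot n) ltac:(unfold a; lra) ltac:(unfold a; lra))
    as [Hie Hiv].
  apply Rle_trans with (RInt (fun t => / (t - p1)) a (knot n)).
  - rewrite Hiv. unfold a. replace (p1 + y / (p1 - p2) - p1) with (y / (p1 - p2)) by ring.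
    unfold Rdiv at 1. rewrite ln_mult, ln_Rinv, ln_y by (try apply Rinv_0_lt_compat; lra).
    assert (Hln : ln (p1 * p2) <= ln ((knot n - p1) * (p1 - p2))).
    { apply ln_le; [apply Rmult_lt_0_compat; lra|]. apply Rmult_le_compat; lra. }
    rewrite Hp, ln_knot, ln_mult in Hln by lra. lra.
  - apply RInt_le; [unfold a; lra|exact Hie|apply ex_RInt_K; unfold a; lra|].
    intros t Ht. unfold a in Ht.
    apply K_ge_inv_shift; [exact He|unfold in_block; fold p1; lra|lra|].
    fold p1 p2. rewrite <- Hu1. apply Rmult_lt_compat_r; lra.
Qed.

Lemma RInt_K_even_blocks_lower (m : nat) : INR (4 * m + 1) < 2 * L ->
  INR m * (2 * L - 3) - 2 * INR m * (INR m - 1) <= RInt K (knot (2 * m)) 1.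
Proof.
  induction m as [|m IH]; intros Hm.
  { simpl. rewrite knot_0, RInt_point_R. lra. }
  assert (HL : INR (2 * (2 * m) + 5) < 2 * L)
    by (replace (2 * (2 * m) + 5)%nat with (4 * S m + 1)%nat by lia; exact Hm).
  specialize (IH ltac:(apply Rle_lt_trans with (INR (4 * S m + 1)); [apply le_INR; lia|exact Hm])).
  pose proof (RInt_K_even_block_lower (2 * m) (even_ind_double m) HL) as Hpiece.
  set (a := knot (S (2 * m)) + _) in Hpiece. destruct Hpiece as [[Ha1 Ha2] Hpiece].
  assert (E : INR (2 * (2 * m) + 3) = 4 * INR m + 3) by (rewrite plus_INR, !mult_INR; simpl; ring).
  replace (2 * S m)%nat with (S (S (2 * m))) by lia.
  pose proof (knot_le_1 (2 * m)). pose proof (knot_pos (S (S (2 * m)))).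
  rewrite <- (RInt_Chasles_R K _ a 1), <- (RInt_Chasles_R K a (knot (2 * m)) 1)
    by (apply ex_RInt_K; lra).
  assert (0 <= RInt K (knot (S (S (2 * m)))) a).
  { apply RInt_ge_0; [lra|apply ex_RInt_K; lra|]. intros x Hx. apply K_bounds. lra. }
  rewrite S_INR. nra.
Qed.

Lemma RInt_K_lower : L ^ 2 / 8 <= RInt K 0 1.
Proof.
  pose proof ln_r_ge.
  destruct (nfloor_ex (L / 4) ltac:(lra)) as [M [HM1 HM2]].
  pose proof (RInt_K_even_blocks_lower M ltac:(rewrite plus_INR, mult_INR; simpl; lra)).
  pose proof (knot_le_1 (2 * M)). pose proof (knot_pos (2 * M)).
  rewrite <- (RInt_Chasles_R K 0 (knot (2 * M)) 1) by (apply ex_RInt_K; lra).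
  assert (0 <= RInt K 0 (knot (2 * M))).
  { apply RInt_ge_0; [lra|apply ex_RInt_K; lra|]. intros x Hx. apply K_bounds. lra. }
  assert (INR M * (2 * L - 3) - 2 * INR M * (INR M - 1) >= INR M * (3 / 2 * L - 1)) by nra.
  assert (INR M * (3 / 2 * L - 1) >= (L / 4 - 1) * (3 / 2 * L - 1)) by nra.
  nra.
Qed.

End Large_r.

Theorem proposition7p5 :
  (exists c1 c2 R1 : R, 0 < c1 /\ 0 < c2 /\
     forall r : R, r0 Hex < r -> R1 < r ->
       c1 * ln r <= INR (kappa_H Hex r) <= c2 * ln r) /\
  (exists c1 c2 R1 : R, 0 < c1 /\ 0 < c2 /\
     forall r : R, r0 Hex < r -> R1 < r ->
       c1 * (ln r) ^ 2 <= RInt (fun t => K_H Hex r t) 0 1 <= c2 * (ln r) ^ 2).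
Proof.
  split.
  - exists (1 / 4), 2, (exp 40). split; [lra|]. split; [lra|].
    intros r _ Hr. assert (Hr' : exp 40 <= r) by lra.
    assert (Hk : kappa_spec Hex r (kappa_H Hex r))
      by (unfold kappa_H, the_nat; apply epsilon_spec, kappa_spec_exists, Hr').
    pose proof (kappa_lower r Hr' _ Hk). pose proof (kappa_upper r Hr' _ Hk). lra.
  - exists (1 / 8), 4, (exp 40). split; [lra|]. split; [lra|].
    intros r _ Hr. assert (Hr' : exp 40 <= r) by lra.
    change (fun t => K_H Hex r t) with (K_H Hex r).
    pose proof (RInt_K_lower r Hr'). pose proof (RInt_K_upper r Hr'). lra.
Qed.
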